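(* Let $R$ be a finite local ring and let $\phi,\psi$ be non-trivial additive characters of $R$. (i) If $\phi$ and $\psi$ have different conductors, then $K(\phi,\psi)=0$. (ii) If $\phi$ and $\psi$ both have conductor $I$, then $K(\phi,\psi)=|I|\,K(\phi',\psi')$, where $\phi',\psi'$ are the primitive characters of $R/I$ inducing $\phi,\psi$, and $K(\phi',\psi')$ is the Kloosterman sum over $R/I$.
   Context: All rings are finite and commutative with identity; $S^\times$ is the unit group of a ring $S$. An additive character is a homomorphism $(S,+)\to\mathbb{C}^*$; its conductor is the largest ideal on which it is identically $1$; it is primitive if its conductor is $(0)$. A character of $R$ with conductor $I$ factors through a primitive character of $R/I$. The Kloosterman sum over $S$ is $K(\phi,\psi)=\sum_{u\in S^\times}\phi(u)\psi(u^{-1})$. *)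

From HB Require Import structures.
From mathcomp Require Import all_boot all_order all_algebra all_field.
Set Implicit Arguments. Unset Strict Implicit. Unset Printing Implicit Defensive.
Import Order.TTheory GRing.Theory Num.Theory.
Local Open Scope ring_scope.

Definition is_ideal (R : finComUnitRingType) (I : {set R}) : Prop :=
  [/\ 0 \in I,
      (forall x y, x \in I -> y \in I -> x - y \in I) &
      (forall r x, x \in I -> r * x \in I)].

Definition maximal_ideal (R : finComUnitRingType) (M : {set R}) : Prop :=
  [/\ is_ideal M, M != [set: R] &
      forall N : {set R}, is_ideal N -> M \subset N -> N = M \/ N = [set: R]].

Definition local_ring (R : finComUnitRingType) : Prop :=
  exists M : {set R}, maximal_ideal M /\
    forall N : {set R}, maximal_ideal N -> N = M.

Definition additive_char (R : finComUnitRingType) (phi : R -> algC) : Prop :=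
  (forall x, phi x != 0) /\ (forall x y, phi (x + y) = phi x * phi y).

Definition nontrivial_char (R : finComUnitRingType) (phi : R -> algC) : Prop :=
  exists x, phi x != 1.

Definition is_conductor (R : finComUnitRingType) (phi : R -> algC) (I : {set R})
  : Prop :=
  [/\ is_ideal I, (forall x, x \in I -> phi x = 1) &
      forall J : {set R}, is_ideal J -> (forall x, x \in J -> phi x = 1) ->
        J \subset I].

Definition primitive_char (R : finComUnitRingType) (phi : R -> algC) : Prop :=
  is_conductor phi [set 0].

Definition kloosterman (R : finComUnitRingType) (phi psi : R -> algC) : algC :=
  \sum_(u : R | u \is a GRing.unit) phi u * psi u^-1.

From HB Require Import structures.
From mathcomp Require Import all_boot all_order all_algebra all_field.
Import Order.TTheory GRing.Theory Num.Theory.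
Local Open Scope ring_scope.
Set Implicit Arguments. Unset Strict Implicit.

(* In a local ring, 1 + b is a unit for b in any proper ideal I, so u |-> u (1 + b)^-1
   permutes the units. If phi is trivial on I, this substitution multiplies the
   summand phi(u) psi(u^-1) by psi(b u^-1); averaging over b in I produces the factor
   \sum_(b in I) psi b, which vanishes as soon as psi is non-trivial on I. When the
   conductors differ, one of them is not contained in the other, and this applies
   to K(phi, psi) or to K(psi, phi) = K(phi, psi).
   For (ii), units of R are exactly the lifts of units of R/I (again because
   1 + I consists of units), and every fibre of R -> R/I has #|I| elements. *)

Section Ideals.
Variable R : finComUnitRingType.
Implicit Types (I M : {set R}) (a b r x y : R).

Lemma idealN I x : is_ideal I -> x \in I -> - x \in I.
Proof. by case=> I0 IB _ xI; rewrite -sub0r IB. Qed.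

Lemma idealD I x y : is_ideal I -> x \in I -> y \in I -> x + y \in I.
Proof.
by move=> iI xI yI; rewrite -[y]opprK; case: (iI) => _ IB _; apply/IB/idealN.
Qed.

Lemma idealMl I r x : is_ideal I -> x \in I -> r * x \in I.
Proof. by case=> _ _; apply. Qed.

Lemma ideal1_setT I : is_ideal I -> 1 \in I -> I = [set: R].
Proof. by move=> iI I1; apply/setP => r; rewrite inE -[r]mulr1 idealMl. Qed.

Definition idealb I := [&& 0 \in I,
  [forall x, forall y, (x \in I) ==> (y \in I) ==> (x - y \in I)] &
  [forall r, forall x, (x \in I) ==> (r * x \in I)]].

Lemma idealP I : reflect (is_ideal I) (idealb I).
Proof.
apply: (iffP and3P) => [[I0 /forallP IB /forallP IM] | [I0 IB IM]]; split=> //.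
- by move=> x y xI yI; move/forallP/(_ y): (IB x); rewrite xI yI.
- by move=> r x xI; move/forallP/(_ x): (IM r); rewrite xI.
- by do 2![apply/forallP => ?]; do 2![apply/implyP => ?]; apply: IB.
- by do 2![apply/forallP => ?]; apply/implyP; apply: IM.
Qed.

Lemma proper_ideal_sub_maximal I : is_ideal I -> I != [set: R] ->
  exists2 M, maximal_ideal M & I \subset M.
Proof.
move=> iI IT; pose P (J : {set R}) := [&& idealb J, J != [set: R] & I \subset J].
have PI : P I by rewrite /P IT subxx !andbT; apply/idealP.
have [M /and3P[/idealP iM MT IM] maxM] := arg_maxnP (fun J : {set R} => #|J|) PI.
exists M => //; split=> // N iN MN.
have [-> | NT] := eqVneq N [set: R]; [by right | left].
apply/eqP; rewrite eq_sym eqEcard MN; apply: maxM.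
by rewrite /P NT (subset_trans IM MN) !andbT; apply/idealP.
Qed.

Lemma local_ring_maximalP : local_ring R ->
  exists2 M, maximal_ideal M &
    forall I, is_ideal I -> I != [set: R] -> I \subset M.
Proof.
case=> M [maxM uniqM]; exists M => // I iI IT.
by have [M' /uniqM -> ] := proper_ideal_sub_maximal iI IT.
Qed.

Definition principal_ideal a := [set a * r | r : R].

Lemma principal_ideal_is_ideal a : is_ideal (principal_ideal a).
Proof.
split.
- by apply/imsetP; exists 0; rewrite // mulr0.
- move=> _ _ /imsetP[r _ ->] /imsetP[s _ ->].
  by apply/imsetP; exists (r - s); rewrite // mulrBr.
- move=> r _ /imsetP[s _ ->].
  by apply/imsetP; exists (r * s); rewrite // mulrCA.
Qed.

Lemma principal_idealT a :
  (principal_ideal a == [set: R]) = (a \is a GRing.unit).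
Proof.
apply/eqP/idP => [aRT | aU].
  have /imsetP[r _ ar] : 1 \in principal_ideal a by rewrite aRT inE.
  by apply/unitrPr; exists r.
by apply/setP => x; rewrite !inE; apply/imsetP; exists (a^-1 * x); rewrite // mulrA mulrV // mul1r.
Qed.

Lemma local_unit1D I b : local_ring R -> is_ideal I -> I != [set: R] ->
  b \in I -> 1 + b \is a GRing.unit.
Proof.
move=> /local_ring_maximalP[M [iM MT _] subM] iI IT bI.
apply: contraR MT => nU; apply/eqP/ideal1_setT => //.
have bM : b \in M := subsetP (subM _ iI IT) _ bI.
have cM : 1 + b \in M.
  apply: (subsetP (subM _ (principal_ideal_is_ideal (1 + b)) _)).
    by rewrite principal_idealT.
  by apply/imsetP; exists 1; rewrite // mulr1.
by rewrite -(addrK b 1); case: iM => _ IB _; apply: IB.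
Qed.

End Ideals.

Section Characters.
Variable R : finComUnitRingType.
Implicit Types (phi psi : R -> algC) (I J : {set R}).

Lemma sum_ideal_mulr (F : R -> algC) I w : is_ideal I -> w \is a GRing.unit ->
  \sum_(b in I) F (b * w) = \sum_(b in I) F b.
Proof.
move=> iI wU; rewrite [RHS](reindex_inj (mulIr wU)) /=.
apply: eq_bigl => b; apply/idP/idP => bI; first by rewrite mulrC idealMl.
by rewrite -(mulrK wU b) mulrC idealMl.
Qed.

Lemma sum_char_ideal_eq0 psi I c : additive_char psi -> is_ideal I ->
  c \in I -> psi c != 1 -> \sum_(b in I) psi b = 0.
Proof.
move=> [_ psiD] iI cI psic.
have shift : psi c * \sum_(b in I) psi b = \sum_(b in I) psi b.
  rewrite big_distrr /= [RHS](reindex_inj (addrI c)) /=.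
  apply: eq_big => [b | b _]; last by rewrite psiD.
  apply/idP/idP => bI; first exact: idealD.
  by rewrite -(addKr c b) idealD ?idealN.
apply/eqP; move/eqP: shift; rewrite -subr_eq0 -{2}[\sum_(b in I) _]mul1r.
by rewrite -mulrBl mulf_eq0 subr_eq0 (negbTE psic).
Qed.

Lemma conductor_proper phi I : is_conductor phi I -> nontrivial_char phi ->
  I != [set: R].
Proof.
by case=> _ phiI _ [x phix]; apply: contraNneq phix => IT; rewrite phiI ?IT ?inE.
Qed.

Lemma conductor_nontrivial_on phi I J : is_conductor phi I -> is_ideal J ->
  ~~ (J \subset I) -> exists2 c, c \in J & phi c != 1.
Proof.
case=> _ _ maxI iJ JI; apply/exists_inP; apply: contraR JI => /exists_inPn phiJ.
by apply: maxI => // x /phiJ /negPn /eqP.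
Qed.

End Characters.

Section Kloosterman.
Variable R : finComUnitRingType.
Implicit Types (phi psi : R -> algC) (I : {set R}).

Lemma kloosterman_sym phi psi : kloosterman phi psi = kloosterman psi phi.
Proof.
rewrite /kloosterman (reindex_inj invr_inj) /=.
by apply: eq_big => [u | u _]; rewrite ?unitrV // invrK mulrC.
Qed.

Lemma kloosterman_shift phi psi I b : local_ring R ->
  additive_char phi -> additive_char psi -> is_ideal I -> I != [set: R] ->
  {in I, forall x, phi x = 1} -> b \in I ->
  kloosterman phi psi =
    \sum_(u | u \is a GRing.unit) phi u * psi u^-1 * psi (b * u^-1).
Proof.
move=> loc [_ phiD] [_ psiD] iI IT phiI bI.
have cU : 1 + b \is a GRing.unit := local_unit1D loc iI IT bI.
have cVU : (1 + b)^-1 \is a GRing.unit by rewrite unitrV.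
rewrite /kloosterman (reindex_inj (mulIr cVU)) /=.
apply: eq_big => u; rewrite unitrMl // => uU.
have uc : u * (1 + b)^-1 = u + (- (u * (1 + b)^-1)) * b.
  by rewrite -{2}(divrK cU u) mulrDr mulr1 mulNr addrK.
rewrite {1}uc phiD [phi (_ * b)]phiI ?idealMl // mulr1.
by rewrite invrM // invrK mulrDl mul1r psiD mulrA.
Qed.

Lemma kloosterman_eq0 phi psi I c : local_ring R ->
  additive_char phi -> additive_char psi -> is_ideal I -> I != [set: R] ->
  {in I, forall x, phi x = 1} -> c \in I -> psi c != 1 ->
  kloosterman phi psi = 0.
Proof.
move=> loc Aphi Apsi iI IT phiI cI psic.
have KI : kloosterman phi psi *+ #|I| = 0.
  rewrite -sumr_const (eq_bigr _ (fun b => kloosterman_shift loc Aphi Apsi iI IT phiI)).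
  rewrite exchange_big big1 //= => u uU.
  rewrite -big_distrr /= sum_ideal_mulr ?unitrV //.
  by rewrite (sum_char_ideal_eq0 Apsi iI cI psic) mulr0.
apply/eqP; move/eqP: KI; rewrite mulrn_eq0 => /orP[/eqP/card0_eq/(_ c) | //].
by rewrite cI.
Qed.

End Kloosterman.

Section Quotient.
Variables (R S : finComUnitRingType) (f : {rmorphism R -> S}) (I : {set R}).
Hypotheses (f_surj : forall y, exists x, f x = y)
           (kerf : [set x | f x == 0] = I).

Lemma ker_is_ideal : is_ideal I.
Proof.
rewrite -kerf; split=> [ | x y | r x]; rewrite !inE.
- by rewrite rmorph0.
- by rewrite rmorphB => /eqP -> /eqP ->; rewrite subr0.
- by rewrite rmorphM => /eqP ->; rewrite mulr0.
Qed.

Lemma ker_proper : I != [set: R].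
Proof.
apply: contra_neq (oner_neq0 S) => IT.
have : (1 : R) \in I by rewrite IT inE.
by rewrite -kerf inE rmorph1 => /eqP.
Qed.

Lemma card_rmorph_fibre y : #|[set x | f x == y]| = #|I|.
Proof.
have [x0 fx0] := f_surj y.
suff -> : [set x | f x == y] = [set x0 + b | b in I] by rewrite card_imset //; apply: addrI.
apply/setP => x; rewrite inE; apply/eqP/imsetP => [fx | [b bI ->]].
  exists (x - x0); last by rewrite addrC subrK.
  by rewrite -kerf inE rmorphB fx fx0 subrr.
by move: bI; rewrite -kerf inE rmorphD fx0 => /eqP ->; rewrite addr0.
Qed.

Hypothesis R_local : local_ring R.

Lemma rmorph_unit_lift x : f x \is a GRing.unit -> x \is a GRing.unit.
Proof.
case/unitrP => y' [_ xy']; have [y fy] := f_surj y'.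
have xy1 : x * y - 1 \in I by rewrite -kerf inE rmorphB rmorphM rmorph1 fy xy' subrr.
have := local_unit1D R_local ker_is_ideal ker_proper xy1.
by rewrite addrC subrK unitrM => /andP[].
Qed.

Lemma kloosterman_quotient (phi psi : R -> algC) (phi' psi' : S -> algC) :
  (forall x, phi x = phi' (f x)) -> (forall x, psi x = psi' (f x)) ->
  kloosterman phi psi = (#|I|)%:R * kloosterman phi' psi'.
Proof.
move=> phi_f psi_f; rewrite /kloosterman mulr_natl -sumrMnl.
rewrite (partition_big f (fun v => v \is a GRing.unit)) /=; last first.
  by move=> u uU; rewrite rmorph_unit.
apply: eq_bigr => v vU; rewrite -(card_rmorph_fibre v) -sumr_const.
apply: eq_big => [u | u /andP[uU /eqP fu]]; last by rewrite phi_f psi_f rmorphV // fu.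
rewrite inE andbC; case: eqP => //= fu.
by apply: rmorph_unit_lift; rewrite fu.
Qed.

End Quotient.

Unset Implicit Arguments. Set Strict Implicit.

Theorem mainTheorem14 (R : finComUnitRingType) (phi psi : R -> algC) :
  local_ring R ->
  additive_char phi -> additive_char psi ->
  nontrivial_char phi -> nontrivial_char psi ->
  (* (i) different conductors *)
  (forall I J : {set R}, is_conductor phi I -> is_conductor psi J -> I != J ->
     kloosterman phi psi = 0) /\
  (* (ii) same conductor I; R/I is represented by any ring S with a
     surjective ring morphism f : R -> S of kernel I *)
  (forall I : {set R}, is_conductor phi I -> is_conductor psi I ->
   forall (S : finComUnitRingType) (f : {rmorphism R -> S}),
     (forall y : S, exists x : R, f x = y) ->
     [set x : R | f x == 0] = I ->
   forall phi' psi' : S -> algC,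
     additive_char phi' -> additive_char psi' ->
     primitive_char phi' -> primitive_char psi' ->
     (forall x, phi x = phi' (f x)) -> (forall x, psi x = psi' (f x)) ->
     kloosterman phi psi = (#|I|)%:R * kloosterman phi' psi').
Proof.
move=> R_local Aphi Apsi phi_nt psi_nt; split=> [I J cI cJ IJ | I _ _ S f f_surj kerf].
  have [iI phiI _] := cI; have [iJ psiJ _] := cJ.
  have [IJsub | nIJ] := boolP (I \subset J).
    have nJI : ~~ (J \subset I) by apply: contra IJ => JI; rewrite eqEsubset IJsub.
    have [c Jc phic] := conductor_nontrivial_on cI iJ nJI.
    rewrite kloosterman_sym.
    exact: kloosterman_eq0 R_local Apsi Aphi iJ (conductor_proper cJ psi_nt) psiJ Jc phic.
  have [c Ic psic] := conductor_nontrivial_on cJ iI nIJ.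
  exact: kloosterman_eq0 R_local Aphi Apsi iI (conductor_proper cI phi_nt) phiI Ic psic.
move=> phi' psi' _ _ _ _; exact: kloosterman_quotient.
Qed.
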